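(* Let $\Lambda$ be a unital commutative ring, $q\ge1$ an integer, $\mathfrak g$ a Lie algebra over $\Lambda$ and $\mathfrak h$ an ideal of $\mathfrak g$. There is a Lie action of $\mathfrak g$ on $\mathfrak h\otimes^q\mathfrak g$ given on generators by ${}^{g'}(h\otimes g)=[g',h]\otimes g+h\otimes[g',g]$ and ${}^{g}\{h\}=\{[g,h]\}$, and a Lie action of $\mathfrak g$ on $\mathfrak h\wedge^q\mathfrak g$ given by ${}^{g'}(h\wedge g)=[g',h]\wedge g+h\wedge[g',g]$ and ${}^{g}\{h\}=\{[g,h]\}$. With these actions, the homomorphisms $\xi^{\otimes}\colon\mathfrak h\otimes^q\mathfrak g\to\mathfrak g$ and $\xi^{\wedge}\colon\mathfrak h\wedge^q\mathfrak g\to\mathfrak g$ are $q$-crossed $\mathfrak g$-modules.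
   Context: All Lie algebras are over $\Lambda$. A Lie action of $\mathfrak g$ on $\mathfrak h$ is a $\Lambda$-bilinear map $(g,h)\mapsto{}^gh$ with ${}^{[g,g']}h={}^g({}^{g'}h)-{}^{g'}({}^gh)$ and ${}^g[h,h']=[{}^gh,h']+[h,{}^gh']$. A $q$-crossed $\mathfrak g$-module is a Lie homomorphism $\mu\colon\mathfrak k\to\mathfrak g$ with a Lie action of $\mathfrak g$ on $\mathfrak k$ such that $\mu({}^gk)=[g,\mu(k)]$, ${}^{\mu(k)}k'=[k,k']$ and $qk=0$ for all $g\in\mathfrak g$, $k,k'\in\mathfrak k$, $k\in\operatorname{Ker}\mu$ respectively. The non-abelian $q$-tensor product $\mathfrak h\otimes^q\mathfrak g$ is the Lie algebra generated by symbols $h\otimes g$ and $\{h\}$ ($h\in\mathfrak h$, $g\in\mathfrak g$) subject to, for all $h,h'\in\mathfrak h$, $g,g'\in\mathfrak g$, $\lambda,\lambda'\in\Lambda$: (1) $\lambda(h\otimes g)=\lambda h\otimes g=h\otimes\lambda g$; (2) $(h+h')\otimes g=h\otimes g+h'\otimes g$; (3) $h\otimes(g+g')=h\otimes g+h\otimes g'$; (4) $[h,h']\otimes g=h\otimes[h',g]-h'\otimes[h,g]$; (5) $h\otimes[g,g']=[g',h]\otimes g-[g,h]\otimes g'$; (6) $[h\otimes g,h'\otimes g']=[h,g]\otimes[h',g']$; (7) $[\{h'\},h\otimes g]=[qh',h]\otimes g+h\otimes[qh',g]$; (8) $\{\lambda h+\lambda'h'\}=\lambda\{h\}+\lambda'\{h'\}$;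 (9) $[\{h\},\{h'\}]=qh\otimes qh'$; (10) $\{[h,g]\}=q(h\otimes g)$. The $q$-exterior product $\mathfrak h\wedge^q\mathfrak g$ is its quotient by the relations $h\otimes h=0$ ($h\in\mathfrak h$), images written $h\wedge g,\{h\}$. The homomorphism $\xi^{\otimes}$ is given by $\xi^{\otimes}(h\otimes g)=[h,g]$, $\xi^{\otimes}(\{h\})=qh$, and $\xi^{\wedge}$ is the induced map on $\mathfrak h\wedge^q\mathfrak g$. *)

From HB Require Import structures.
From mathcomp Require Import all_boot all_algebra.
Set Implicit Arguments. Unset Strict Implicit. Unset Printing Implicit Defensive.
Import GRing.Theory.
Local Open Scope ring_scope.

HB.mixin Record Lmodule_isLie (R : comPzRingType) V of GRing.Lmodule R V := {
  lie_br : V -> V -> V;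
  lie_brZDl : forall (a : R) (x y z : V),
      lie_br (a *: x + y) z = a *: lie_br x z + lie_br y z;
  lie_brZDr : forall (a : R) (x y z : V),
      lie_br x (a *: y + z) = a *: lie_br x y + lie_br x z;
  lie_brxx : forall x : V, lie_br x x = 0;
  lie_jacobi : forall x y z : V,
      lie_br x (lie_br y z) + lie_br y (lie_br z x) + lie_br z (lie_br x y) = 0
}.

#[short(type="lieType")]
HB.structure Definition Lie (R : comPzRingType) :=
  { V of Lmodule_isLie R V & GRing.Lmodule R V }.

Notation "⟦ x , y ⟧" := (lie_br x y) (format "⟦ x ,  y ⟧").

Section LieDefs.
Variable R : comPzRingType.

Definition lie_hom (A B : lieType R) (f : A -> B) : Prop :=
  (forall (a : R) (x y : A), f (a *: x + y) = a *: f x + f y) /\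
  (forall x y : A, f ⟦x, y⟧ = ⟦f x, f y⟧).

Definition lie_ideal (g : lieType R) (H : g -> Prop) : Prop :=
  [/\ H 0,
      (forall (a : R) (x y : g), H x -> H y -> H (a *: x + y)) &
      (forall x y : g, H y -> H ⟦x, y⟧)].

Definition lie_action (g k : lieType R) (act : g -> k -> k) : Prop :=
  [/\ (forall (a : R) (x y : g) (u : k), act (a *: x + y) u = a *: act x u + act y u),
      (forall (a : R) (x : g) (u v : k), act x (a *: u + v) = a *: act x u + act x v),
      (forall (x y : g) (u : k), act ⟦x, y⟧ u = act x (act y u) - act y (act x u)) &
      (forall (x : g) (u v : k), act x ⟦u, v⟧ = ⟦act x u, v⟧ + ⟦u, act x v⟧)].

Definition q_crossed_module (q : nat) (k g : lieType R) (mu : k -> g)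
    (act : g -> k -> k) : Prop :=
  [/\ lie_hom mu, lie_action act,
      (forall (x : g) (u : k), mu (act x u) = ⟦x, mu u⟧),
      (forall u v : k, act (mu u) v = ⟦u, v⟧) &
      (forall u : k, mu u = 0 -> u *+ q = 0)].

(* Defining relations (1)-(10) of the non-abelian q-tensor product h (x)^q g,
   for h an ideal H of g (acting on itself by the bracket), interpreted in a
   Lie algebra L via t h x := "h (x) x" and c h := "{h}", for h in H. *)
Definition qtensor_rels (q : nat) (wedge : bool) (g : lieType R) (H : g -> Prop)
    (L : lieType R) (t : g -> g -> L) (c : g -> L) : Prop :=
  (forall (a : R) h x, H h ->
                    a *: t h x = t (a *: h) x /\ a *: t h x = t h (a *: x)) /\
      (forall h h' x, H h -> H h' -> t (h + h') x = t h x + t h' x) /\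
      (forall h x x', H h -> t h (x + x') = t h x + t h x') /\
      (forall h h' x, H h -> H h' ->
                    t ⟦h, h'⟧ x = t h ⟦h', x⟧ - t h' ⟦h, x⟧) /\
      (forall h x x', H h -> t h ⟦x, x'⟧ = t ⟦x', h⟧ x - t ⟦x, h⟧ x') /\
      (forall h x h' x', H h -> H h' ->
                    ⟦t h x, t h' x'⟧ = t ⟦h, x⟧ ⟦h', x'⟧) /\
      (forall h' h x, H h' -> H h ->
                    ⟦c h', t h x⟧ = t ⟦h' *+ q, h⟧ x + t h ⟦h' *+ q, x⟧) /\
      (forall (a a' : R) h h', H h -> H h' ->
                    c (a *: h + a' *: h') = a *: c h + a' *: c h') /\
      (forall h h', H h -> H h' -> ⟦c h, c h'⟧ = t (h *+ q) (h' *+ q)) /\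
      (forall h x, H h -> c ⟦h, x⟧ = t h x *+ q) /\
      (wedge -> forall h, H h -> t h h = 0).

(* (T, t, c) is the Lie algebra presented by the generators t h x, c h
   (h in H, x in g) subject to [qtensor_rels]: it satisfies the relations and
   is initial among Lie algebras over R equipped with such data.
   wedge = false: T is h (x)^q g;  wedge = true: T is h /\^q g. *)
Definition is_qtensor_product (q : nat) (wedge : bool) (g : lieType R)
    (H : g -> Prop) (T : lieType R) (t : g -> g -> T) (c : g -> T) : Prop :=
  qtensor_rels q wedge H t c /\
  forall (L : lieType R) (t' : g -> g -> L) (c' : g -> L),
    qtensor_rels q wedge H t' c' ->
    (exists f : T -> L, lie_hom f /\
        (forall h x, H h -> f (t h x) = t' h x) /\ (forall h, H h -> f (c h) = c' h)) /\
    (forall f1 f2 : T -> L, lie_hom f1 -> lie_hom f2 ->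
        (forall h x, H h -> f1 (t h x) = t' h x) -> (forall h, H h -> f1 (c h) = c' h) ->
        (forall h x, H h -> f2 (t h x) = t' h x) -> (forall h, H h -> f2 (c h) = c' h) ->
        forall u, f1 u = f2 u).

End LieDefs.

(* Fix x in g.  The assignment h ⊗ z ↦ (h ⊗ z, [x,h] ⊗ z + h ⊗ [x,z]),
   {h} ↦ ({h}, {[x,h]}) respects the defining relations in the Lie algebra
   T[ε] = T ⊕ εT (ε² = 0), so the universal property yields a homomorphism
   T → T[ε].  Its first component is the identity, hence its second component
   is a derivation of T: this is the action of x.  Similarly h ⊗ z ↦ [h,z],
   {h} ↦ qh respects the relations in g, which gives ξ.  The uniqueness part
   of the universal property, applied to the Lie subalgebra spanned by the
   generators, shows that they generate T; so each crossed-module identity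
   (Lie action, equivariance of ξ, ξ(u) acting as [u,-], qu = {ξ u}) needs only
   be checked on generators, where it follows from the Jacobi identity and the
   relations.  In the exterior case h ⊗ h = 0 is respected because its
   polarisation k ⊗ h + h ⊗ k = 0 holds. *)

From HB Require Import structures.
From mathcomp Require Import all_boot all_algebra.
From mathcomp Require Import boolp.
Import GRing.Theory.
Local Open Scope ring_scope.
Set Implicit Arguments. Unset Strict Implicit. Unset Printing Implicit Defensive.

(* [zmodule] proves identities between sums and differences of atoms in a
   zmodType, by reflection to integer coefficient vectors. *)
Inductive zmod_expr := ZVar of nat | ZAdd of zmod_expr & zmod_expr | ZOpp of zmod_expr | ZZero.

Fixpoint zmod_eval (V : zmodType) (env : seq V) (e : zmod_expr) : V :=
  match e with
  | ZVar i => env`_i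
  | ZAdd a b => zmod_eval env a + zmod_eval env b
  | ZOpp a => - zmod_eval env a
  | ZZero => 0
  end.

Fixpoint zmod_coef (e : zmod_expr) (i : nat) : int :=
  match e with
  | ZVar j => Posz (i == j)
  | ZAdd a b => zmod_coef a i + zmod_coef b i
  | ZOpp a => - zmod_coef a i
  | ZZero => 0
  end.

Lemma zmod_eval_sum (V : zmodType) (env : seq V) e :
  zmod_eval env e = \sum_(i < size env) env`_i *~ zmod_coef e i.
Proof.
elim: e => [j | a IHa b IHb | a IHa |] /=.
- have [ltj | lej] := ltnP j (size env).
    rewrite (bigD1 (Ordinal ltj)) //= eqxx mulr1z big1 ?addr0 // => i.
    by rewrite -val_eqE /= => /negbTE ->; rewrite mulr0z.
  rewrite nth_default // big1 // => i _.
  by rewrite ltn_eqF ?mulr0z // (leq_trans (ltn_ord i)).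
- by rewrite IHa IHb -big_split; apply: eq_bigr => i _; rewrite mulrzDr.
- by rewrite IHa -sumrN; apply: eq_bigr => i _; rewrite mulrNz.
- by rewrite big1 // => i _; rewrite mulr0z.
Qed.

Lemma zmod_eval_eq (V : zmodType) (env : seq V) a b :
  all (fun i => zmod_coef a i == zmod_coef b i) (iota 0 (size env)) ->
  zmod_eval env a = zmod_eval env b.
Proof.
move=> /allP coef_eq; rewrite !zmod_eval_sum; apply: eq_bigr => i _.
by rewrite (eqP (coef_eq _ _)) // mem_iota /=.
Qed.

(* Atoms are compared up to conversion. *)
Ltac zmod_index x env :=
  match env with
  | cons ?y _ => let _ := constr:(erefl x : x = y) in constr:(0%N)
  | cons _ ?env' => let n := zmod_index x env' in constr:(S n)
  end.

Ltac zmod_atoms t env :=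
  lazymatch t with
  | @GRing.add _ ?a ?b => let env := zmod_atoms a env in zmod_atoms b env
  | @GRing.opp _ ?a => zmod_atoms a env
  | @GRing.zero _ => env
  | _ => match env with
         | _ => let _ := zmod_index t env in env
         | _ => constr:(cons t env)
         end
  end.

Ltac zmod_reify t env :=
  lazymatch t with
  | @GRing.add _ ?a ?b =>
      let ea := zmod_reify a env in let eb := zmod_reify b env in constr:(ZAdd ea eb)
  | @GRing.opp _ ?a => let ea := zmod_reify a env in constr:(ZOpp ea)
  | @GRing.zero _ => constr:(ZZero)
  | _ => let i := zmod_index t env in constr:(ZVar i)
  end.

Ltac zmodule :=
  lazymatch goal with
  | |- @eq ?V ?l ?r =>
    let env := zmod_atoms l (@nil V) in
    let env := zmod_atoms r env in
    let el := zmod_reify l env in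
    let er := zmod_reify r env in
    exact (@zmod_eval_eq _ env el er (erefl true))
  end.

Section LinearMap.
Variables (R : comPzRingType) (U V : lmodType R) (f : U -> V).
Hypothesis f_linear : linear f.

Let F : {linear U -> V} := HB.pack f (GRing.isLinear.Build R U V *:%R f f_linear).

Lemma linear_map0 : f 0 = 0. Proof. exact: (linear0 F). Qed.
Lemma linear_mapD x y : f (x + y) = f x + f y. Proof. exact: (linearD F). Qed.
Lemma linear_mapN x : f (- x) = - f x. Proof. exact: (linearN F). Qed.
Lemma linear_mapB x y : f (x - y) = f x - f y. Proof. exact: (linearB F). Qed.
Lemma linear_mapZ a x : f (a *: x) = a *: f x. Proof. exact: (linearZZ F). Qed.
Lemma linear_mapMn x n : f (x *+ n) = f x *+ n. Proof. exact: (linearMn F). Qed.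

End LinearMap.

Section LieAlgebraTheory.
Variables (R : comPzRingType) (L : lieType R).
Implicit Types x y z : L.

Let br_linear_l z : linear (lie_br^~ z : L -> L).
Proof. by move=> a x y; apply: lie_brZDl. Qed.
Let br_linear_r x : linear (lie_br x : L -> L).
Proof. by move=> a y z; apply: lie_brZDr. Qed.

Lemma lie_br0l z : ⟦0, z⟧ = 0 :> L. Proof. exact: linear_map0 (br_linear_l z). Qed.
Lemma lie_br0r x : ⟦x, 0⟧ = 0 :> L. Proof. exact: linear_map0 (br_linear_r x). Qed.
Lemma lie_brDl x y z : ⟦x + y, z⟧ = ⟦x, z⟧ + ⟦y, z⟧.
Proof. exact: linear_mapD (br_linear_l z) x y. Qed.
Lemma lie_brDr x y z : ⟦x, y + z⟧ = ⟦x, y⟧ + ⟦x, z⟧.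
Proof. exact: linear_mapD (br_linear_r x) y z. Qed.
Lemma lie_brNl x z : ⟦- x, z⟧ = - ⟦x, z⟧. Proof. exact: linear_mapN (br_linear_l z) x. Qed.
Lemma lie_brNr x y : ⟦x, - y⟧ = - ⟦x, y⟧. Proof. exact: linear_mapN (br_linear_r x) y. Qed.
Lemma lie_brBl x y z : ⟦x - y, z⟧ = ⟦x, z⟧ - ⟦y, z⟧.
Proof. exact: linear_mapB (br_linear_l z) x y. Qed.
Lemma lie_brBr x y z : ⟦x, y - z⟧ = ⟦x, y⟧ - ⟦x, z⟧.
Proof. exact: linear_mapB (br_linear_r x) y z. Qed.
Lemma lie_brZl a x z : ⟦a *: x, z⟧ = a *: ⟦x, z⟧.
Proof. exact: linear_mapZ (br_linear_l z) a x. Qed.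
Lemma lie_brZr a x y : ⟦x, a *: y⟧ = a *: ⟦x, y⟧.
Proof. exact: linear_mapZ (br_linear_r x) a y. Qed.
Lemma lie_brMnl x z n : ⟦x *+ n, z⟧ = ⟦x, z⟧ *+ n.
Proof. exact: linear_mapMn (br_linear_l z) x n. Qed.
Lemma lie_brMnr x y n : ⟦x, y *+ n⟧ = ⟦x, y⟧ *+ n.
Proof. exact: linear_mapMn (br_linear_r x) y n. Qed.

Lemma lie_brC x y : ⟦x, y⟧ = - ⟦y, x⟧.
Proof.
apply/eqP; rewrite -addr_eq0; apply/eqP.
by have := lie_brxx (x + y); rewrite lie_brDl !lie_brDr !lie_brxx add0r addr0.
Qed.

Lemma lie_br_leibniz x y z : ⟦x, ⟦y, z⟧⟧ = ⟦⟦x, y⟧, z⟧ + ⟦y, ⟦x, z⟧⟧.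
Proof.
have J := lie_jacobi x y z.
rewrite [⟦z, x⟧]lie_brC lie_brNr [⟦z, _⟧]lie_brC in J.
by apply/eqP; rewrite -subr_eq0 -J; apply/eqP; zmodule.
Qed.

Lemma lie_br_ad x y z : ⟦⟦x, y⟧, z⟧ = ⟦x, ⟦y, z⟧⟧ - ⟦y, ⟦x, z⟧⟧.
Proof. by rewrite lie_br_leibniz; zmodule. Qed.

End LieAlgebraTheory.

Section LieHom.
Variables (R : comPzRingType) (A B : lieType R) (f : A -> B).
Hypothesis hf : lie_hom f.

Lemma lie_hom_linear : linear f. Proof. exact: hf.1. Qed.
Lemma lie_hom_br x y : f ⟦x, y⟧ = ⟦f x, f y⟧. Proof. exact: hf.2. Qed.
Lemma lie_hom0 : f 0 = 0. Proof. exact: linear_map0 lie_hom_linear. Qed.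
Lemma lie_homD x y : f (x + y) = f x + f y. Proof. exact: linear_mapD lie_hom_linear x y. Qed.
Lemma lie_homN x : f (- x) = - f x. Proof. exact: linear_mapN lie_hom_linear x. Qed.
Lemma lie_homZ a x : f (a *: x) = a *: f x. Proof. exact: linear_mapZ lie_hom_linear a x. Qed.
Lemma lie_homMn x n : f (x *+ n) = f x *+ n. Proof. exact: linear_mapMn lie_hom_linear x n. Qed.

End LieHom.

Lemma lie_hom_comp (R : comPzRingType) (A B C : lieType R) (f : A -> B) (f' : B -> C) :
  lie_hom f -> lie_hom f' -> lie_hom (f' \o f).
Proof.
move=> hf hf'; split=> [a x y|x y] /=.
  by rewrite (lie_hom_linear hf) (lie_hom_linear hf').
by rewrite !lie_hom_br.
Qed.

Section LieIdeal.
Variables (R : comPzRingType) (g : lieType R) (H : g -> Prop).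
Hypothesis hH : lie_ideal H.

Lemma ideal0 : H 0. Proof. by case: hH. Qed.
Lemma idealZD a x y : H x -> H y -> H (a *: x + y). Proof. by case: hH => _ + _; apply. Qed.
Lemma idealD x y : H x -> H y -> H (x + y).
Proof. by move=> Hx Hy; rewrite -[x]scale1r; apply: idealZD. Qed.
Lemma idealZ a x : H x -> H (a *: x).
Proof. by move=> Hx; rewrite -[_ *: _]addr0; apply: idealZD; last exact: ideal0. Qed.
Lemma idealN x : H x -> H (- x). Proof. by move=> Hx; rewrite -scaleN1r; apply: idealZ. Qed.
Lemma idealMn x n : H x -> H (x *+ n).
Proof.
by move=> Hx; elim: n => [|n IHn]; [rewrite mulr0n; exact: ideal0 | rewrite mulrS; exact: idealD].
Qed.
Lemma ideal_brr x y : H y -> H ⟦x, y⟧. Proof. by case: hH => _ _; apply. Qed.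
Lemma ideal_brl x y : H x -> H ⟦x, y⟧. Proof. by rewrite lie_brC => /(ideal_brr y)/idealN. Qed.

End LieIdeal.

Ltac ideal_closed hH :=
  lazymatch goal with
  | |- _ (_ + _) => apply: (idealD hH); ideal_closed hH
  | |- _ (- _) => apply: (idealN hH); ideal_closed hH
  | |- _ (_ *: _) => apply: (idealZ hH); ideal_closed hH
  | |- _ (_ *+ _) => apply: (idealMn hH); ideal_closed hH
  | |- _ ⟦_, _⟧ => first [ apply: (ideal_brr hH); solve [ideal_closed hH]
                         | apply: (ideal_brl hH); ideal_closed hH ]
  | |- _ 0 => exact: (ideal0 hH)
  | _ => assumption
  end.

#[local] Hint Extern 0 =>
  match goal with hH : lie_ideal ?H |- ?H _ => solve [ideal_closed hH] end : core.

Section LieSubalgebra.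
Variables (R : comPzRingType) (L : lieType R) (P : L -> Prop).

Definition lie_subalg_closed :=
  [/\ P 0, (forall a u v, P u -> P v -> P (a *: u + v)) &
           (forall u v, P u -> P v -> P ⟦u, v⟧)].

(* The closure proof is an argument so that the structures on [lie_sub hP]
   below are canonical for every closed [P]. *)
Definition lie_subalg_pred of lie_subalg_closed : {pred L} := fun u => `[< P u >].

Hypothesis hP : lie_subalg_closed.
Local Notation Pb := (lie_subalg_pred hP).

Let Pb_submod_closed : submod_closed Pb.
Proof.
have [P0 PZD _] := hP; split; first exact/asboolP.
by move=> a u v /asboolP Pu /asboolP Pv; apply/asboolP; apply: PZD.
Qed.
HB.instance Definition _ := GRing.isSubmodClosed.Build R L Pb Pb_submod_closed.

Definition lie_sub := {u : L | u \in Pb}.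
HB.instance Definition _ := [isSub for (val : lie_sub -> L)].
HB.instance Definition _ := [Choice of lie_sub by <:].
HB.instance Definition _ := [SubChoice_isSubLmodule of lie_sub by <:].

Let Pb_br u v : u \in Pb -> v \in Pb -> ⟦u, v⟧ \in Pb.
Proof. by have [_ _ Pbr] := hP; move=> /asboolP Pu /asboolP Pv; apply/asboolP; apply: Pbr. Qed.

Definition lie_sub_br (u v : lie_sub) : lie_sub := Sub ⟦val u, val v⟧ (Pb_br (valP u) (valP v)).

Let lie_sub_brZDl a (u v w : lie_sub) :
  lie_sub_br (a *: u + v) w = a *: lie_sub_br u w + lie_sub_br v w.
Proof. by apply: val_inj; rewrite /= lie_brZDl. Qed.
Let lie_sub_brZDr a (u v w : lie_sub) :
  lie_sub_br u (a *: v + w) = a *: lie_sub_br u v + lie_sub_br u w.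
Proof. by apply: val_inj; rewrite /= lie_brZDr. Qed.
Let lie_sub_brxx (u : lie_sub) : lie_sub_br u u = 0.
Proof. by apply: val_inj; rewrite /= lie_brxx. Qed.
Let lie_sub_jacobi (u v w : lie_sub) :
  lie_sub_br u (lie_sub_br v w) + lie_sub_br v (lie_sub_br w u)
    + lie_sub_br w (lie_sub_br u v) = 0.
Proof. by apply: val_inj; rewrite /= lie_jacobi. Qed.
HB.instance Definition _ := Lmodule_isLie.Build R lie_sub
  lie_sub_brZDl lie_sub_brZDr lie_sub_brxx lie_sub_jacobi.

Lemma lie_sub_val_hom : lie_hom (val : lie_sub -> L).
Proof. by split. Qed.

Lemma lie_sub_insubdK u : P u -> val (insubd (0 : lie_sub) u) = u.
Proof. by move=> Pu; rewrite insubdK //; apply/asboolP. Qed.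

End LieSubalgebra.

(* The pair (u, v) stands for u + εv, with ε² = 0. *)
Definition dualnum (R : comPzRingType) (L : lieType R) : Type := (L * L)%type.
HB.instance Definition _ (R : comPzRingType) (L : lieType R) :=
  GRing.Lmodule.copy (dualnum L) (L * L)%type.

Section DualNumbers.
Variables (R : comPzRingType) (L : lieType R).
Implicit Types u v w : dualnum L.

Definition dualnum_br u v : dualnum L := (⟦u.1, v.1⟧, ⟦u.1, v.2⟧ + ⟦u.2, v.1⟧).

Let dualnum_brZDl a u v w :
  dualnum_br (a *: u + v) w = a *: dualnum_br u w + dualnum_br v w.
Proof. by congr pair; rewrite /= !lie_brZDl // scalerDr; zmodule. Qed.
Let dualnum_brZDr a u v w :
  dualnum_br u (a *: v + w) = a *: dualnum_br u v + dualnum_br u w.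
Proof. by congr pair; rewrite /= !lie_brZDr // scalerDr; zmodule. Qed.
Let dualnum_brxx u : dualnum_br u u = 0.
Proof. by congr pair; rewrite /= ?lie_brxx // [⟦u.2, _⟧]lie_brC; zmodule. Qed.
Let dualnum_jacobi u v w :
  dualnum_br u (dualnum_br v w) + dualnum_br v (dualnum_br w u)
    + dualnum_br w (dualnum_br u v) = 0.
Proof.
congr pair; rewrite /= ?lie_jacobi // !lie_brDr.
transitivity
  ((⟦u.1, ⟦v.1, w.2⟧⟧ + ⟦v.1, ⟦w.2, u.1⟧⟧ + ⟦w.2, ⟦u.1, v.1⟧⟧)
 + (⟦u.1, ⟦v.2, w.1⟧⟧ + ⟦v.2, ⟦w.1, u.1⟧⟧ + ⟦w.1, ⟦u.1, v.2⟧⟧)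
 + (⟦u.2, ⟦v.1, w.1⟧⟧ + ⟦v.1, ⟦w.1, u.2⟧⟧ + ⟦w.1, ⟦u.2, v.1⟧⟧)); first zmodule.
by rewrite !lie_jacobi !addr0.
Qed.
HB.instance Definition _ := Lmodule_isLie.Build R (dualnum L)
  dualnum_brZDl dualnum_brZDr dualnum_brxx dualnum_jacobi.

Lemma dualnum_brE u v : ⟦u, v⟧ = (⟦u.1, v.1⟧, ⟦u.1, v.2⟧ + ⟦u.2, v.1⟧).
Proof. by []. Qed.
End DualNumbers.

Section QTensor.
Variables (R : comPzRingType) (q : nat) (wedge : bool) (g : lieType R) (H : g -> Prop).
Hypothesis hH : lie_ideal H.

Section Relations.
Variables (L : lieType R) (t : g -> g -> L) (c : g -> L).
Hypothesis hr : qtensor_rels q wedge H t c.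

Lemma qt_Zl a h x : H h -> t (a *: h) x = a *: t h x.
Proof. by move=> Hh; rewrite (hr.1 a h x Hh).1. Qed.
Lemma qt_Zr a h x : H h -> t h (a *: x) = a *: t h x.
Proof. by move=> Hh; rewrite (hr.1 a h x Hh).2. Qed.
Lemma qt_Dl h h' x : H h -> H h' -> t (h + h') x = t h x + t h' x.
Proof. exact: hr.2.1. Qed.
Lemma qt_Dr h x x' : H h -> t h (x + x') = t h x + t h x'.
Proof. exact: hr.2.2.1. Qed.
Lemma qt_brl h h' x : H h -> H h' -> t ⟦h, h'⟧ x = t h ⟦h', x⟧ - t h' ⟦h, x⟧.
Proof. exact: hr.2.2.2.1. Qed.
Lemma qt_brr h x x' : H h -> t h ⟦x, x'⟧ = t ⟦x', h⟧ x - t ⟦x, h⟧ x'.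
Proof. exact: hr.2.2.2.2.1. Qed.
Lemma qt_br_tt h x h' x' : H h -> H h' -> ⟦t h x, t h' x'⟧ = t ⟦h, x⟧ ⟦h', x'⟧.
Proof. exact: hr.2.2.2.2.2.1. Qed.
Lemma qt_br_ct h' h x : H h' -> H h ->
  ⟦c h', t h x⟧ = t ⟦h' *+ q, h⟧ x + t h ⟦h' *+ q, x⟧.
Proof. exact: hr.2.2.2.2.2.2.1. Qed.
Lemma qt_cZD a a' h h' : H h -> H h' -> c (a *: h + a' *: h') = a *: c h + a' *: c h'.
Proof. exact: hr.2.2.2.2.2.2.2.1. Qed.
Lemma qt_br_cc h h' : H h -> H h' -> ⟦c h, c h'⟧ = t (h *+ q) (h' *+ q).
Proof. exact: hr.2.2.2.2.2.2.2.2.1. Qed.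
Lemma qt_c_br h x : H h -> c ⟦h, x⟧ = t h x *+ q.
Proof. exact: hr.2.2.2.2.2.2.2.2.2.1. Qed.
Lemma qt_diag h : wedge -> H h -> t h h = 0.
Proof. by move=> w; apply: hr.2.2.2.2.2.2.2.2.2.2. Qed.

Lemma qt_linear_r h : H h -> linear (t h).
Proof. by move=> Hh a x y; rewrite qt_Dr // qt_Zr. Qed.

Lemma qt_Br h x x' : H h -> t h (x - x') = t h x - t h x'.
Proof. by move=> Hh; apply: linear_mapB (qt_linear_r Hh) x x'. Qed.
Lemma qt_Mnr h x n : H h -> t h (x *+ n) = t h x *+ n.
Proof. by move=> Hh; apply: linear_mapMn (qt_linear_r Hh) x n. Qed.

Lemma qt_0l x : t 0 x = 0.
Proof. by rewrite -(scale0r 0) qt_Zl ?scale0r. Qed.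
Lemma qt_Nl h x : H h -> t (- h) x = - t h x.
Proof. by move=> Hh; rewrite -scaleN1r qt_Zl // scaleN1r. Qed.
Lemma qt_Bl h h' x : H h -> H h' -> t (h - h') x = t h x - t h' x.
Proof. by move=> Hh Hh'; rewrite qt_Dl ?qt_Nl. Qed.
Lemma qt_Mnl h x n : H h -> t (h *+ n) x = t h x *+ n.
Proof. by move=> Hh; elim: n => [|n IHn]; rewrite ?mulr0n ?qt_0l // !mulrS qt_Dl ?IHn. Qed.

Lemma qt_cZ a h : H h -> c (a *: h) = a *: c h.
Proof. by move=> Hh; have := qt_cZD a 0 Hh (ideal0 hH); rewrite !scale0r !addr0. Qed.
Lemma qt_c0 : c 0 = 0.
Proof. by rewrite -(scale0r 0) qt_cZ ?scale0r. Qed.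
Lemma qt_cD h h' : H h -> H h' -> c (h + h') = c h + c h'.
Proof. by move=> Hh Hh'; have := qt_cZD 1 1 Hh Hh'; rewrite !scale1r. Qed.
Lemma qt_cN h : H h -> c (- h) = - c h.
Proof. by move=> Hh; rewrite -scaleN1r qt_cZ // scaleN1r. Qed.
Lemma qt_cB h h' : H h -> H h' -> c (h - h') = c h - c h'.
Proof. by move=> Hh Hh'; rewrite qt_cD ?qt_cN. Qed.
Lemma qt_cMn h n : H h -> c (h *+ n) = c h *+ n.
Proof. by move=> Hh; elim: n => [|n IHn]; rewrite ?mulr0n ?qt_c0 // !mulrS qt_cD ?IHn. Qed.

Lemma qt_br_ct_c k h x : H k -> H h -> ⟦c k, t h x⟧ = c ⟦k, ⟦h, x⟧⟧.
Proof.
move=> Hk Hh; rewrite qt_br_ct // qt_c_br // !lie_brMnl qt_Mnl // qt_Mnr // -mulrnDl.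
by rewrite (qt_brl (h := k) (h' := h) x) // subrK.
Qed.

Lemma qt_br_cc_c k h : H k -> H h -> ⟦c k, c h⟧ = c ⟦k, h *+ q⟧.
Proof. by move=> Hk Hh; rewrite qt_br_cc // qt_c_br // qt_Mnl. Qed.

Lemma qt_antisym h h' : wedge -> H h -> H h' -> t h h' + t h' h = 0.
Proof.
move=> w Hh Hh'; have := qt_diag w (idealD hH Hh Hh').
by rewrite qt_Dl // !qt_Dr // !qt_diag // add0r addr0.
Qed.

End Relations.

Lemma qtensor_rels_pullback (A B : lieType R) (f : A -> B)
    (t : g -> g -> B) (c : g -> B) (t' : g -> g -> A) (c' : g -> A) :
  lie_hom f -> injective f ->
  (forall h x, H h -> f (t' h x) = t h x) -> (forall h, H h -> f (c' h) = c h) ->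
  qtensor_rels q wedge H t c -> qtensor_rels q wedge H t' c'.
Proof.
move=> hf f_inj ft fc hr.
have homE := (lie_homD hf, lie_homN hf, lie_homZ hf, lie_homMn hf, lie_hom_br hf,
              lie_hom0 hf).
split=> [a h x Hh|]; first by split; apply: f_inj; rewrite !homE !ft // (qt_Zl hr, qt_Zr hr).
split=> [h h' x Hh Hh'|]; first by apply: f_inj; rewrite !homE !ft // (qt_Dl hr).
split=> [h x x' Hh|]; first by apply: f_inj; rewrite !homE !ft // (qt_Dr hr).
split=> [h h' x Hh Hh'|]; first by apply: f_inj; rewrite !homE !ft // (qt_brl hr).
split=> [h x x' Hh|]; first by apply: f_inj; rewrite !homE !ft // (qt_brr hr).
split=> [h x h' x' Hh Hh'|]; first by apply: f_inj; rewrite !homE !ft // (qt_br_tt hr).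
split=> [h' h x Hh' Hh|]; first by apply: f_inj; rewrite !homE !ft ?fc // (qt_br_ct hr).
split=> [a a' h h' Hh Hh'|]; first by apply: f_inj; rewrite !homE !fc // (qt_cZD hr).
split=> [h h' Hh Hh'|]; first by apply: f_inj; rewrite !homE !ft ?fc // (qt_br_cc hr).
split=> [h x Hh|]; first by apply: f_inj; rewrite !homE !ft ?fc // (qt_c_br hr).
by move=> w h Hh; apply: f_inj; rewrite !homE ft // (qt_diag hr).
Qed.

Lemma qtensor_ind (T : lieType R) (t : g -> g -> T) (c : g -> T) :
  is_qtensor_product q wedge H t c -> forall P : T -> Prop,
  P 0 -> (forall a u v, P u -> P v -> P (a *: u + v)) ->
  (forall u v, P u -> P v -> P ⟦u, v⟧) ->
  (forall h x, H h -> P (t h x)) -> (forall h, H h -> P (c h)) ->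
  forall u, P u.
Proof.
move=> hT P P0 PZD Pbr Pt Pc.
have hP : lie_subalg_closed P by [].
pose t' h x : lie_sub hP := insubd 0 (t h x).
pose c' h : lie_sub hP := insubd 0 (c h).
have ft h x : H h -> val (t' h x) = t h x by move=> Hh; apply/lie_sub_insubdK/Pt.
have fc h : H h -> val (c' h) = c h by move=> Hh; apply/lie_sub_insubdK/Pc.
have [[f [hf [f_t f_c]]] _] := hT.2 _ t' c'
  (qtensor_rels_pullback (lie_sub_val_hom hP) val_inj ft fc hT.1).
have [_ hT_uniq] := hT.2 _ t c hT.1.
move=> u; have <- : val (f u) = u.
  apply: (hT_uniq (val \o f) id (lie_hom_comp hf (lie_sub_val_hom hP))) => //=.
    by move=> h x Hh; rewrite f_t ?ft.
  by move=> h Hh; rewrite f_c ?fc.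
exact/asboolP/(valP (f u)).
Qed.

Lemma qtensor_rels_bracket : qtensor_rels q wedge H (fun h x => ⟦h, x⟧) (fun h => h *+ q).
Proof.
split=> [a h x _|]; first by rewrite lie_brZl lie_brZr.
split=> [h h' x _ _|]; first exact: lie_brDl.
split=> [h x x' _|]; first exact: lie_brDr.
split=> [h h' x _ _|]; first exact: lie_br_ad.
split=> [h x x' _|].
  rewrite lie_br_leibniz [⟦⟦x', h⟧, x⟧]lie_brC [⟦x', h⟧]lie_brC lie_brNr opprK.
  by rewrite [⟦x, h⟧]lie_brC lie_brNl; zmodule.
split=> [//|]; split=> [h' h x _ _|]; first exact: lie_br_leibniz.
split=> [a a' h h' _ _|]; first by rewrite mulrnDl !scalerMnr.
by do 2!split=> //; move=> _ h _; apply: lie_brxx.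
Qed.

Section Derivation.
Variables (L : lieType R) (t : g -> g -> L) (c : g -> L).
Hypothesis hr : qtensor_rels q wedge H t c.
Variable x : g.

Definition deriv_t h z : dualnum L := (t h z, t ⟦x, h⟧ z + t h ⟦x, z⟧).
Definition deriv_c h : dualnum L := (c h, c ⟦x, h⟧).

Let deriv_Z a h z : H h ->
  a *: deriv_t h z = deriv_t (a *: h) z /\ a *: deriv_t h z = deriv_t h (a *: z).
Proof.
move=> Hh; split; apply: injective_projections => /=.
- by rewrite (qt_Zl hr).
- by rewrite lie_brZr !(qt_Zl hr) // scalerDr.
- by rewrite (qt_Zr hr).
- by rewrite lie_brZr !(qt_Zr hr) // scalerDr.
Qed.

Let deriv_Dl h h' z : H h -> H h' -> deriv_t (h + h') z = deriv_t h z + deriv_t h' z.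
Proof.
move=> Hh Hh'; apply: injective_projections => /=; first by rewrite (qt_Dl hr).
by rewrite lie_brDr !(qt_Dl hr) //; zmodule.
Qed.

Let deriv_Dr h z z' : H h -> deriv_t h (z + z') = deriv_t h z + deriv_t h z'.
Proof.
move=> Hh; apply: injective_projections => /=; first by rewrite (qt_Dr hr).
by rewrite lie_brDr !(qt_Dr hr) //; zmodule.
Qed.

Let deriv_brl h h' z : H h -> H h' ->
  deriv_t ⟦h, h'⟧ z = deriv_t h ⟦h', z⟧ - deriv_t h' ⟦h, z⟧.
Proof.
move=> Hh Hh'; apply: injective_projections => /=; first by rewrite (qt_brl hr).
rewrite !(lie_br_leibniz x) !(qt_Dl hr) // !(qt_Dr hr) //.
rewrite (qt_brl hr (h := ⟦x, h⟧)) // (qt_brl hr (h' := ⟦x, h'⟧)) //.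
rewrite (qt_brl hr (h := h) (h' := h') ⟦x, z⟧) //.
zmodule.
Qed.

Let deriv_brr h z z' : H h -> deriv_t h ⟦z, z'⟧ = deriv_t ⟦z', h⟧ z - deriv_t ⟦z, h⟧ z'.
Proof.
move=> Hh; apply: injective_projections => /=; first by rewrite (qt_brr hr).
rewrite (qt_brr hr (h := ⟦x, h⟧)) // (lie_br_leibniz x z z') (qt_Dr hr) //.
rewrite (qt_brr hr ⟦x, z⟧) // (qt_brr hr z ⟦x, z'⟧) //.
rewrite !(lie_br_leibniz x _ h) !(qt_Dl hr) //.
zmodule.
Qed.

Let deriv_br_tt h z h' z' : H h -> H h' ->
  ⟦deriv_t h z, deriv_t h' z'⟧ = deriv_t ⟦h, z⟧ ⟦h', z'⟧.
Proof.
move=> Hh Hh'; rewrite dualnum_brE; apply: injective_projections => /=.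
  by rewrite (qt_br_tt hr).
rewrite lie_brDr lie_brDl !(qt_br_tt hr) // !(lie_br_leibniz x) (qt_Dl hr) // (qt_Dr hr) //.
zmodule.
Qed.

Let deriv_br_ct h' h z : H h' -> H h ->
  ⟦deriv_c h', deriv_t h z⟧ = deriv_t ⟦h' *+ q, h⟧ z + deriv_t h ⟦h' *+ q, z⟧.
Proof.
move=> Hh' Hh; rewrite dualnum_brE; apply: injective_projections => /=.
  by rewrite (qt_br_ct hr).
rewrite lie_brDr !(qt_br_ct hr) // !(lie_br_leibniz x (h' *+ q)) !lie_brMnr.
by rewrite !(qt_Dl hr) // !(qt_Dr hr) //; zmodule.
Qed.

Let deriv_cZD a a' h h' : H h -> H h' ->
  deriv_c (a *: h + a' *: h') = a *: deriv_c h + a' *: deriv_c h'.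
Proof.
move=> Hh Hh'; apply: injective_projections => /=; first by rewrite (qt_cZD hr).
by rewrite lie_brDr !lie_brZr (qt_cZD hr).
Qed.

Let deriv_br_cc h h' : H h -> H h' -> ⟦deriv_c h, deriv_c h'⟧ = deriv_t (h *+ q) (h' *+ q).
Proof.
move=> Hh Hh'; rewrite dualnum_brE; apply: injective_projections => /=.
  by rewrite (qt_br_cc hr).
by rewrite !(qt_br_cc hr) // !lie_brMnr addrC.
Qed.

Let deriv_c_br h z : H h -> deriv_c ⟦h, z⟧ = deriv_t h z *+ q.
Proof.
move=> Hh; apply: injective_projections; rewrite raddfMn /=.
  exact: (qt_c_br hr).
by rewrite (lie_br_leibniz x h z) (qt_cD hr) // !(qt_c_br hr) // mulrnDl.
Qed.

Let deriv_diag : wedge -> forall h, H h -> deriv_t h h = 0.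
Proof.
move=> w h Hh; apply: injective_projections => /=; first by rewrite (qt_diag hr).
by rewrite (qt_antisym hr).
Qed.

Lemma qtensor_rels_derivation : qtensor_rels q wedge H deriv_t deriv_c.
Proof.
exact: (conj deriv_Z (conj deriv_Dl (conj deriv_Dr (conj deriv_brl (conj deriv_brr
  (conj deriv_br_tt (conj deriv_br_ct (conj deriv_cZD (conj deriv_br_cc
  (conj deriv_c_br deriv_diag)))))))))).
Qed.

End Derivation.

Section CrossedModule.
Variables (T : lieType R) (t : g -> g -> T) (c : g -> T).
Hypothesis hT : is_qtensor_product q wedge H t c.
Let hr := hT.1.

Let deriv_hom_exists x : exists f : T -> dualnum T, [/\ lie_hom f,
  forall h z, H h -> f (t h z) = deriv_t t x h z & forall h, H h -> f (c h) = deriv_c c x h].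
Proof.
have [[f [hf [ft fc]]] _] := hT.2 _ _ _ (qtensor_rels_derivation hr x).
by exists f.
Qed.

Let qt_deriv x : T -> dualnum T := sval (cid (deriv_hom_exists x)).
Let qt_deriv_hom x : lie_hom (qt_deriv x).
Proof. by case: (svalP (cid (deriv_hom_exists x))). Qed.
Let qt_deriv_t x h z : H h -> qt_deriv x (t h z) = deriv_t t x h z.
Proof. by case: (svalP (cid (deriv_hom_exists x))) => _ + _; apply. Qed.
Let qt_deriv_c x h : H h -> qt_deriv x (c h) = deriv_c c x h.
Proof. by case: (svalP (cid (deriv_hom_exists x))) => _ _; apply. Qed.

Let qt_deriv_fst x u : (qt_deriv x u).1 = u.
Proof.
elim/(qtensor_ind hT): u => [|a u v IHu IHv|u v IHu IHv|h z Hh|h Hh].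
- by rewrite lie_hom0.
- by rewrite (lie_hom_linear (qt_deriv_hom x)) /= IHu IHv.
- by rewrite (lie_hom_br (qt_deriv_hom x)) /= IHu IHv.
- by rewrite qt_deriv_t.
- by rewrite qt_deriv_c.
Qed.

Definition qt_act x u : T := (qt_deriv x u).2.

Lemma qt_act_linear x : linear (qt_act x).
Proof. by move=> a u v; rewrite /qt_act (lie_hom_linear (qt_deriv_hom x)). Qed.

Lemma qt_act_br x u v : qt_act x ⟦u, v⟧ = ⟦qt_act x u, v⟧ + ⟦u, qt_act x v⟧.
Proof. by rewrite /qt_act (lie_hom_br (qt_deriv_hom x)) /= !qt_deriv_fst addrC. Qed.

Lemma qt_act_t x h z : H h -> qt_act x (t h z) = t ⟦x, h⟧ z + t h ⟦x, z⟧.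
Proof. by move=> Hh; rewrite /qt_act qt_deriv_t. Qed.

Lemma qt_act_c x h : H h -> qt_act x (c h) = c ⟦x, h⟧.
Proof. by move=> Hh; rewrite /qt_act qt_deriv_c. Qed.

Lemma qt_act0 x : qt_act x 0 = 0. Proof. exact: linear_map0 (qt_act_linear x). Qed.
Lemma qt_actD x u v : qt_act x (u + v) = qt_act x u + qt_act x v.
Proof. exact: linear_mapD (qt_act_linear x) u v. Qed.

Lemma qt_act_linear_l u : linear (qt_act^~ u).
Proof.
move=> a x y; elim/(qtensor_ind hT): u => [|a' u v IHu IHv|u v IHu IHv|h z Hh|h Hh].
- by rewrite !qt_act0 scaler0 addr0.
- rewrite !qt_act_linear IHu IHv !scalerDr !scalerA mulrC; zmodule.
- rewrite !qt_act_br IHu IHv lie_brZDl lie_brZDr scalerDr; zmodule.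
- rewrite !qt_act_t // !lie_brZDl (qt_Dl hr) // (qt_Zl hr) // (qt_Dr hr) // (qt_Zr hr) //.
  rewrite scalerDr; zmodule.
- by rewrite !qt_act_c // lie_brZDl (qt_cD hr) // (qt_cZ hr).
Qed.

Lemma qt_act_br_l x y u : qt_act ⟦x, y⟧ u = qt_act x (qt_act y u) - qt_act y (qt_act x u).
Proof.
elim/(qtensor_ind hT): u => [|a u v IHu IHv|u v IHu IHv|h z Hh|h Hh].
- by rewrite !qt_act0 subr0.
- rewrite !qt_act_linear IHu IHv scalerBr; zmodule.
- rewrite !qt_act_br IHu IHv !qt_actD !qt_act_br lie_brBl lie_brBr; zmodule.
- rewrite !qt_act_t // !qt_actD !qt_act_t // (lie_br_ad x y h) (lie_br_ad x y z).
  rewrite (qt_Bl hr) // (qt_Br hr) //; zmodule.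
- by rewrite !qt_act_c // (lie_br_ad x y h) (qt_cB hr).
Qed.

Lemma qt_lie_action : lie_action qt_act.
Proof.
split=> [a x y u|x a u v|x y u|x u v].
- exact: qt_act_linear_l.
- exact: qt_act_linear.
- exact: qt_act_br_l.
- exact: qt_act_br.
Qed.

Lemma qt_act_eq_ad x w :
  (forall h z, H h -> qt_act x (t h z) = ⟦w, t h z⟧) ->
  (forall h, H h -> qt_act x (c h) = ⟦w, c h⟧) ->
  forall u, qt_act x u = ⟦w, u⟧.
Proof.
move=> act_t act_c; elim/(qtensor_ind hT) => [|a u v IHu IHv|u v IHu IHv|h z Hh|h Hh].
- by rewrite qt_act0 lie_br0r.
- by rewrite qt_act_linear IHu IHv lie_brZDr.
- by rewrite qt_act_br IHu IHv (lie_br_leibniz w).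
- exact: act_t.
- exact: act_c.
Qed.

Section Boundary.
Variable xi : T -> g.
Hypotheses (hxi : lie_hom xi) (xi_t : forall h z, H h -> xi (t h z) = ⟦h, z⟧)
  (xi_c : forall h, H h -> xi (c h) = h *+ q).

Lemma qt_xi_ideal u : H (xi u).
Proof.
elim/(qtensor_ind hT): u => [|a u v IHu IHv|u v IHu IHv|h z Hh|h Hh].
- by rewrite lie_hom0.
- by rewrite (lie_hom_linear hxi).
- by rewrite (lie_hom_br hxi).
- by rewrite xi_t.
- by rewrite xi_c.
Qed.

Lemma qt_xi_act x u : xi (qt_act x u) = ⟦x, xi u⟧.
Proof.
elim/(qtensor_ind hT): u => [|a u v IHu IHv|u v IHu IHv|h z Hh|h Hh].
- by rewrite qt_act0 lie_hom0 // lie_br0r.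
- by rewrite qt_act_linear !(lie_hom_linear hxi) IHu IHv lie_brZDr.
- by rewrite qt_act_br (lie_homD hxi) !(lie_hom_br hxi) IHu IHv (lie_br_leibniz x).
- by rewrite qt_act_t // (lie_homD hxi) !xi_t // (lie_br_leibniz x).
- by rewrite qt_act_c // !xi_c // lie_brMnr.
Qed.

Lemma qt_act_xi u v : qt_act (xi u) v = ⟦u, v⟧.
Proof.
elim/(qtensor_ind hT): u v => [|a u u' IHu IHu'|u u' IHu IHu'|h z Hh|h Hh] v.
- by rewrite lie_hom0 // (linear_map0 (qt_act_linear_l v)) lie_br0l.
- by rewrite (lie_hom_linear hxi) qt_act_linear_l IHu IHu' lie_brZDl.
- by rewrite (lie_hom_br hxi) qt_act_br_l !IHu' !IHu lie_br_ad.
- rewrite xi_t //; move: v; apply: qt_act_eq_ad => [h' z' Hh'|h' Hh'].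
    by rewrite qt_act_t // (qt_br_tt hr) // (qt_brl hr (h := ⟦h, z⟧) (h' := h') z') // subrK.
  by rewrite qt_act_c // [RHS]lie_brC (qt_br_ct_c hr) // -(qt_cN hr) // -lie_brC.
- rewrite xi_c //; move: v; apply: qt_act_eq_ad => [h' z' Hh'|h' Hh'].
    by rewrite qt_act_t // (qt_br_ct hr).
  by rewrite qt_act_c // (qt_br_cc_c hr) // lie_brMnl lie_brMnr.
Qed.

Lemma qt_br_c_xi k u : H k -> ⟦c k, u⟧ = c ⟦k, xi u⟧.
Proof.
elim/(qtensor_ind hT): u k => [|a u v IHu IHv|u v IHu IHv|h z Hh|h Hh] k Hk.
- by rewrite lie_br0r lie_hom0 // lie_br0r (qt_c0 hr).
- have Hu := qt_xi_ideal u; have Hv := qt_xi_ideal v.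
  by rewrite lie_brZDr IHu // IHv // (lie_hom_linear hxi) lie_brZDr (qt_cD hr) // (qt_cZ hr).
- have Hu := qt_xi_ideal u; have Hv := qt_xi_ideal v.
  rewrite (lie_br_leibniz (c k)) (IHu k) // (IHv k) // (IHv ⟦k, xi u⟧) //.
  rewrite [⟦u, _⟧]lie_brC (IHu ⟦k, xi v⟧) //.
  by rewrite (lie_hom_br hxi) (lie_br_leibniz k) [⟦xi u, _⟧]lie_brC (qt_cD hr) // (qt_cN hr).
- by rewrite xi_t // (qt_br_ct_c hr).
- by rewrite xi_c // (qt_br_cc_c hr).
Qed.

Lemma qt_mulrn_xi u : u *+ q = c (xi u).
Proof.
elim/(qtensor_ind hT): u => [|a u v IHu IHv|u v IHu IHv|h z Hh|h Hh].
- by rewrite mul0rn lie_hom0 // (qt_c0 hr).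
- have Hu := qt_xi_ideal u; have Hv := qt_xi_ideal v.
  by rewrite mulrnDl scalerMnr IHu IHv (lie_hom_linear hxi) (qt_cD hr) // (qt_cZ hr).
- have Hu := qt_xi_ideal u.
  by rewrite -lie_brMnl IHu qt_br_c_xi // (lie_hom_br hxi).
- by rewrite xi_t // (qt_c_br hr).
- by rewrite xi_c // (qt_cMn hr).
Qed.

Lemma qt_q_crossed_module : q_crossed_module q xi qt_act.
Proof.
split=> //; [exact: qt_lie_action | exact: qt_xi_act | exact: qt_act_xi |].
by move=> u xi_u0; rewrite qt_mulrn_xi xi_u0 (qt_c0 hr).
Qed.

End Boundary.

Lemma qtensor_q_crossed_module : exists (act : g -> T -> T) (xi : T -> g),
  lie_action act /\
  (forall x h z, H h -> act x (t h z) = t ⟦x, h⟧ z + t h ⟦x, z⟧) /\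
  (forall x h, H h -> act x (c h) = c ⟦x, h⟧) /\
  lie_hom xi /\
  (forall h z, H h -> xi (t h z) = ⟦h, z⟧) /\
  (forall h, H h -> xi (c h) = h *+ q) /\
  q_crossed_module q xi act.
Proof.
have [[xi [hxi [xi_t xi_c]]] _] := hT.2 _ _ _ qtensor_rels_bracket.
exists qt_act, xi.
split; first exact: qt_lie_action.
split; first exact: qt_act_t.
split; first exact: qt_act_c.
by split=> //; split=> //; split=> //; apply: qt_q_crossed_module.
Qed.

End CrossedModule.
End QTensor.

Theorem proposition2p5 (R : comPzRingType) (q : nat) (hq : (0 < q)%N)
  (g : lieType R) (H : g -> Prop) (hH : lie_ideal H)
  (T : lieType R) (t : g -> g -> T) (c : g -> T)
  (hT : is_qtensor_product q false H t c)
  (W : lieType R) (w : g -> g -> W) (cw : g -> W)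
  (hW : is_qtensor_product q true H w cw) :
  (exists (act : g -> T -> T) (xi : T -> g),
     lie_action act /\
         (forall x' h x, H h -> act x' (t h x) = t ⟦x', h⟧ x + t h ⟦x', x⟧) /\
         (forall x h, H h -> act x (c h) = c ⟦x, h⟧) /\
         lie_hom xi /\
         (forall h x, H h -> xi (t h x) = ⟦h, x⟧) /\
         (forall h, H h -> xi (c h) = h *+ q) /\
         q_crossed_module q xi act) /\
  (exists (act : g -> W -> W) (xi : W -> g),
     lie_action act /\
         (forall x' h x, H h -> act x' (w h x) = w ⟦x', h⟧ x + w h ⟦x', x⟧) /\
         (forall x h, H h -> act x (cw h) = cw ⟦x, h⟧) /\
         lie_hom xi /\
         (forall h x, H h -> xi (w h x) = ⟦h, x⟧) /\
         (forall h, H h -> xi (cw h) = h *+ q) /\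
         q_crossed_module q xi act).
Proof.
split; [exact (qtensor_q_crossed_module hH hT) | exact (qtensor_q_crossed_module hH hW)].
Qed.
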